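(* Let $\mathcal C,\mathcal D$ be strict monoidal categories, $F:\mathcal D\to\mathcal C$ a strong comonoidal functor with a left adjoint $\overline F:\mathcal C\to\mathcal D$, where $\overline F$ is equipped with a comonoidal structure $(\overline F^2,\overline F^0)$ such that the adjunction is comonoidal (i.e. its unit $\eta:\mathrm{Id}_{\mathcal C}\to F\overline F$ and counit are comonoidal transformations). Let $G$ be a comonoidal endofunctor of $\mathcal D$ and $(X,\gamma_X)\in\mathcal Z^G_{\mathrm{lax}}(\mathcal D)$. Define, for $V\in\mathcal C$, $$\gamma_{FX,V}:=F^2(G\overline F V,X)\circ F(\gamma_{X,\overline F V})\circ F^{-2}(X,\overline FV)\circ(FX\otimes\eta_V):FX\otimes V\to (FG\overline F)(V)\otimes FX.$$ Then $\gamma_{FX}$ is a lax $(FG\overline F)$-half-braiding on $FX$ (with $FG\overline F$ carrying the composite comonoidal structure), and $F_*:(X,\gamma_X)\mapsto(FX,\gamma_{FX})$, $f\mapsto F(f)$ defines a functor $F_*:\mathcal Z^G_{\mathrm{lax}}(\mathcal D)\to\mathcal Z^{FG\overline F}_{\mathrm{lax}}(\mathcal C)$.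
   Context: All monoidal categories are strict. A comonoidal functor is a triple $(F,F^2,F^0)$ with $F^0:F(\mathbf 1)\to\mathbf 1$ and $F^2(X,Y):F(X\otimes Y)\to FX\otimes FY$ natural, satisfying $(F^2(X,Y)\otimes FZ)F^2(X\otimes Y,Z)=(FX\otimes F^2(Y,Z))F^2(X,Y\otimes Z)$ and $(FX\otimes F^0)F^2(X,\mathbf 1)=\mathrm{id}=(F^0\otimes FX)F^2(\mathbf 1,X)$; it is strong if $F^2,F^0$ are invertible, and $F^{-2}$ denotes the inverse of $F^2$. Composite comonoidal structure: $(GF)^2(X,Y)=G^2(FX,FY)\circ G(F^2(X,Y))$, $(GF)^0=G^0\circ G(F^0)$. A comonoidal transformation $\alpha:F\to K$ satisfies $(\alpha_X\otimes\alpha_Y)F^2(X,Y)=K^2(X,Y)\alpha_{X\otimes Y}$ and $K^0\alpha_{\mathbf 1}=F^0$. For a comonoidal endofunctor $F$ of $\mathcal C$, a lax $F$-half-braiding on $X$ is a family $\gamma_{X,V}:X\otimes V\to FV\otimes X$ natural in $V$ with $(F^2(V,W)\otimes X)\gamma_{X,V\otimes W}=(FV\otimes\gamma_{X,W})(\gamma_{X,V}\otimes W)$ and $(F^0\otimes X)\gamma_{X,\mathbf 1}=\mathrm{id}_X$. $\mathcal Z^F_{\mathrm{lax}}(\mathcal C)$ is the category of pairs $(X,\gamma_X)$ with morphisms those $f:X_1\to X_2$ in $\mathcal C$ satisfying $(FV\otimes f)\gamma_{X_1,V}=\gamma_{X_2,V}(f\otimes V)$ for all $V$. *)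

(* Strictness of the monoidal structure is encoded by equalities of
   objects (associativity, unit laws) together with the corresponding equalities
   of morphisms, transported along those object equalities via [idtoiso]. *)

Record Category := {
  ob :> Type;
  hom : ob -> ob -> Type;
  idm : forall a, hom a a;
  comp : forall a b c, hom b c -> hom a b -> hom a c;
  comp_assoc : forall a b c d (h : hom c d) (g : hom b c) (f : hom a b),
      comp a c d h (comp a b c g f) = comp a b d (comp b c d h g) f;
  comp_id_l : forall a b (f : hom a b), comp a b b (idm b) f = f;
  comp_id_r : forall a b (f : hom a b), comp a a b f (idm a) = f
}.
Arguments hom {c} _ _ : rename.
Arguments idm {c} a : rename.
Arguments comp {c a b c0} _ _ : rename.

Notation "g <o f" := (comp g f) (at level 40, left associativity).

Definition idtoiso {C : Category} {a b : C} (p : a = b) : hom a b :=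
  match p in (_ = b') return hom a b' with eq_refl => idm a end.

Record SMC := {
  cat :> Category;
  tens : cat -> cat -> cat;
  tens_hom : forall a b a' b', hom a b -> hom a' b' -> hom (tens a a') (tens b b');
  unit_ob : cat;
  tens_id : forall a a', tens_hom a a a' a' (idm a) (idm a') = idm (tens a a');
  tens_comp : forall a b c a' b' c' (g : hom b c) (f : hom a b)
                (g' : hom b' c') (f' : hom a' b'),
      tens_hom a c a' c' (g <o f) (g' <o f')
      = tens_hom b c b' c' g g' <o tens_hom a b a' b' f f';
  assoc_ob : forall a b c, tens (tens a b) c = tens a (tens b c);
  lunit_ob : forall a, tens unit_ob a = a;
  runit_ob : forall a, tens a unit_ob = a;
  assoc_hom : forall a1 a2 a3 b1 b2 b3 (f : hom a1 b1) (g : hom a2 b2) (h : hom a3 b3),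
      idtoiso (assoc_ob b1 b2 b3)
        <o tens_hom (tens a1 a2) (tens b1 b2) a3 b3 (tens_hom a1 b1 a2 b2 f g) h
      = tens_hom a1 b1 (tens a2 a3) (tens b2 b3) f (tens_hom a2 b2 a3 b3 g h)
        <o idtoiso (assoc_ob a1 a2 a3);
  lunit_hom : forall a b (f : hom a b),
      idtoiso (lunit_ob b) <o tens_hom unit_ob unit_ob a b (idm unit_ob) f
      = f <o idtoiso (lunit_ob a);
  runit_hom : forall a b (f : hom a b),
      idtoiso (runit_ob b) <o tens_hom a b unit_ob unit_ob f (idm unit_ob)
      = f <o idtoiso (runit_ob a)
}.
Arguments tens {s} _ _.
Arguments tens_hom {s a b a' b'} _ _.
Arguments unit_ob {s}.
Arguments assoc_ob {s} a b c.
Arguments lunit_ob {s} a.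
Arguments runit_ob {s} a.

Infix "⊗" := tens (at level 30, right associativity).
Infix "⊠" := tens_hom (at level 30, right associativity).
Notation "'I'" := unit_ob.

Record Functor (C D : Category) := {
  fob :> C -> D;
  fmap : forall a b, hom a b -> hom (fob a) (fob b);
  fmap_id : forall a, fmap a a (idm a) = idm (fob a);
  fmap_comp : forall a b c (g : hom b c) (f : hom a b),
      fmap a c (g <o f) = fmap b c g <o fmap a b f
}.
Arguments fob {C D} f _ : rename.
Arguments fmap {C D} f {a b} _ : rename.

Definition id_functor (C : Category) : Functor C C.
Proof.
  refine {| fob := fun a => a; fmap := fun a b f => f |}; reflexivity.
Defined.

Definition comp_functor {C D E : Category} (G : Functor D E) (F : Functor C D)
  : Functor C E.
Proof.
  refine {| fob := fun a => G (F a); fmap := fun a b f => fmap G (fmap F f) |}.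
  - intro a. rewrite !fmap_id. reflexivity.
  - intros. rewrite !fmap_comp. reflexivity.
Defined.

Definition co2_type {C D : SMC} (F : Functor C D) :=
  forall X Y : C, hom (F (X ⊗ Y)) (F X ⊗ F Y).
Definition co0_type {C D : SMC} (F : Functor C D) := hom (F I) (@unit_ob D).

Definition is_comonoidal {C D : SMC} (F : Functor C D) (F2 : co2_type F)
  (F0 : co0_type F) : Prop :=
  (forall X X' Y Y' (f : hom X X') (g : hom Y Y'),
      F2 X' Y' <o fmap F (f ⊠ g) = (fmap F f ⊠ fmap F g) <o F2 X Y) /\
  (forall X Y Z : C,
      idtoiso (assoc_ob (F X) (F Y) (F Z)) <o ((F2 X Y ⊠ idm (F Z)) <o F2 (X ⊗ Y) Z)
      = ((idm (F X) ⊠ F2 Y Z) <o F2 X (Y ⊗ Z)) <o idtoiso (f_equal (fob F) (assoc_ob X Y Z))) /\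
  (forall X : C,
      idtoiso (runit_ob (F X)) <o ((idm (F X) ⊠ F0) <o F2 X I)
      = idtoiso (f_equal (fob F) (runit_ob X))) /\
  (forall X : C,
      idtoiso (lunit_ob (F X)) <o ((F0 ⊠ idm (F X)) <o F2 I X)
      = idtoiso (f_equal (fob F) (lunit_ob X))).

Definition is_iso {C : Category} {a b : C} (f : hom a b) : Prop :=
  exists g : hom b a, g <o f = idm a /\ f <o g = idm b.

Definition id_co2 (C : SMC) : co2_type (id_functor C) := fun X Y => idm (X ⊗ Y).
Definition id_co0 (C : SMC) : co0_type (id_functor C) := idm (@unit_ob C).

Definition comp_co2 {C D E : SMC} (G : Functor D E) (F : Functor C D)
  (G2 : co2_type G) (F2 : co2_type F) : co2_type (comp_functor G F) :=
  fun X Y => G2 (F X) (F Y) <o fmap G (F2 X Y).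
Definition comp_co0 {C D E : SMC} (G : Functor D E) (F : Functor C D)
  (G0 : co0_type G) (F0 : co0_type F) : co0_type (comp_functor G F) :=
  G0 <o fmap G F0.

Definition is_natural {C D : Category} (F K : Functor C D)
  (a : forall X : C, hom (F X) (K X)) : Prop :=
  forall X Y (f : hom X Y), a Y <o fmap F f = fmap K f <o a X.

Definition is_comonoidal_trans {C D : SMC} (F K : Functor C D)
  (F2 : co2_type F) (F0 : co0_type F) (K2 : co2_type K) (K0 : co0_type K)
  (a : forall X : C, hom (F X) (K X)) : Prop :=
  is_natural F K a /\
  (forall X Y : C, (a X ⊠ a Y) <o F2 X Y = K2 X Y <o a (X ⊗ Y)) /\
  K0 <o a I = F0.

Definition is_adjunction {C D : Category} (Fbar : Functor C D) (F : Functor D C)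
  (eta : forall V : C, hom V (F (Fbar V)))
  (eps : forall X : D, hom (Fbar (F X)) X) : Prop :=
  is_natural (id_functor C) (comp_functor F Fbar) eta /\
  is_natural (comp_functor Fbar F) (id_functor D) eps /\
  (forall V : C, eps (Fbar V) <o fmap Fbar (eta V) = idm (Fbar V)) /\
  (forall X : D, fmap F (eps X) <o eta (F X) = idm (F X)).

Definition is_lax_hb {C : SMC} (F : Functor C C) (F2 : co2_type F)
  (F0 : co0_type F) (X : C) (g : forall V : C, hom (X ⊗ V) (F V ⊗ X)) : Prop :=
  (forall V W (f : hom V W), g W <o (idm X ⊠ f) = (fmap F f ⊠ idm X) <o g V) /\
  (forall V W : C,
      idtoiso (assoc_ob (F V) (F W) X) <o ((F2 V W ⊠ idm X) <o g (V ⊗ W))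
        <o idtoiso (assoc_ob X V W)
      = (idm (F V) ⊠ g W) <o idtoiso (assoc_ob (F V) X W) <o (g V ⊠ idm W)) /\
  (idtoiso (lunit_ob X) <o ((F0 ⊠ idm X) <o g I) = idtoiso (runit_ob X)).

Definition is_Zmor {C : SMC} (F : Functor C C) (X1 X2 : C)
  (g1 : forall V : C, hom (X1 ⊗ V) (F V ⊗ X1))
  (g2 : forall V : C, hom (X2 ⊗ V) (F V ⊗ X2)) (f : hom X1 X2) : Prop :=
  forall V : C, (idm (F V) ⊠ f) <o g1 V = g2 V <o (f ⊠ idm V).

Definition pushed_hb {C D : SMC} (F : Functor D C) (F2 : co2_type F)
  (Finv2 : forall X Y : D, hom (F X ⊗ F Y) (F (X ⊗ Y)))
  (Fbar : Functor C D) (eta : forall V : C, hom V (F (Fbar V)))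
  (G : Functor D D) (X : D) (g : forall V : D, hom (X ⊗ V) (G V ⊗ X))
  : forall V : C, hom (F X ⊗ V) (comp_functor F (comp_functor G Fbar) V ⊗ F X) :=
  fun V => F2 (G (Fbar V)) X <o fmap F (g (Fbar V)) <o Finv2 X (Fbar V)
           <o (idm (F X) ⊠ eta V).


(* Each axiom of a lax half-braiding for γ_FX is
   pushed, by naturality of F^2, F^-2 and η and the coassociativity of F^2,
   onto the corresponding axiom of γ_X.  The only extra input is that η is
   comonoidal, which reads F(F̄^2) ∘ η = F^-2 ∘ (η ⊗ η) and F(F̄^0) ∘ η_I = (F^0)^-1. *)

Lemma compA {K : Category} {a b c d : K} (h : hom c d) (g : hom b c) (f : hom a b) :
  h <o (g <o f) = h <o g <o f.
Proof. apply comp_assoc. Qed.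

Lemma comp_congr_l {K : Category} {p q r s : K} {a : hom q r} {b : hom p q} {c : hom p r}
  (E : a <o b = c) (x : hom r s) : x <o a <o b = x <o c.
Proof. rewrite <- compA, E. reflexivity. Qed.

Lemma comp_congr3_l {K : Category} {p q r s t : K} {a : hom r s} {b : hom q r}
  {c : hom p q} {d : hom p s} (E : a <o b <o c = d) (x : hom s t) :
  x <o a <o b <o c = x <o d.
Proof. rewrite <- !compA, (compA a), E. reflexivity. Qed.

Tactic Notation "rewrite_comp" uconstr(E) :=
  first [rewrite E | rewrite (comp_congr_l E) | rewrite (comp_congr3_l E)];
  repeat rewrite compA.
Tactic Notation "rewrite_comp" "<-" uconstr(E) :=
  first [rewrite <- E | rewrite (comp_congr_l (eq_sym E))];
  repeat rewrite compA.

Lemma comp_square_inverses {K : Category} {p q r s : K}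
  (a : hom p q) (k2 : hom r p) (k1 : hom s q) (b : hom r s) (li : hom q s) (ri : hom p r) :
  a <o k2 = k1 <o b -> li <o k1 = idm s -> k2 <o ri = idm p -> li <o a = b <o ri.
Proof.
  intros E H1 H2.
  rewrite <- (comp_id_r _ _ _ (li <o a)), <- H2, !compA, <- (compA li a k2), E, !compA,
    H1, comp_id_l.
  reflexivity.
Qed.

Lemma fmap_idtoiso {K L : Category} (F : Functor K L) {a b : K} (p : a = b) :
  fmap F (idtoiso p) = idtoiso (f_equal (fob F) p).
Proof. destruct p. apply fmap_id. Qed.

Section StrictMonoidal.
Variable M : SMC.

Lemma tens_comp_idl {a b c x : M} (g : hom b c) (f : hom a b) :
  (g <o f) ⊠ idm x = (g ⊠ idm x) <o (f ⊠ idm x).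
Proof. rewrite <- tens_comp, comp_id_l. reflexivity. Qed.

Lemma tens_comp_idr {a b c x : M} (g : hom b c) (f : hom a b) :
  idm x ⊠ (g <o f) = (idm x ⊠ g) <o (idm x ⊠ f).
Proof. rewrite <- tens_comp, comp_id_l. reflexivity. Qed.

Lemma tens_split {a b a' b' : M} (f : hom a b) (g : hom a' b') :
  f ⊠ g = (f ⊠ idm b') <o (idm a ⊠ g).
Proof. rewrite <- tens_comp, comp_id_l, comp_id_r. reflexivity. Qed.

Lemma tens_interchange {a b a' b' : M} (f : hom a b) (g : hom a' b') :
  (f ⊠ idm b') <o (idm a ⊠ g) = (idm b ⊠ g) <o (f ⊠ idm a').
Proof. rewrite <- !tens_comp, !comp_id_l, !comp_id_r. reflexivity. Qed.

Lemma assoc_hom_idl {a b c c' : M} (h : hom c c') :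
  idtoiso (assoc_ob a b c') <o (idm (a ⊗ b) ⊠ h)
  = (idm a ⊠ (idm b ⊠ h)) <o idtoiso (assoc_ob a b c).
Proof. rewrite <- assoc_hom, tens_id. reflexivity. Qed.

End StrictMonoidal.

Arguments tens_comp_idl {M a b c x}.
Arguments tens_comp_idr {M a b c x}.
Arguments tens_split {M a b a' b'}.
Arguments tens_interchange {M a b a' b'}.
Arguments assoc_hom_idl {M a b c c'}.

Section StrongComonoidal.
Variables (C D : SMC) (F : Functor D C) (F2 : co2_type F) (F0 : co0_type F)
  (Finv2 : forall X Y : D, hom (F X ⊗ F Y) (F (X ⊗ Y))).
Hypothesis HF : is_comonoidal F F2 F0.
Hypothesis HFinv2 : forall X Y : D, Finv2 X Y <o F2 X Y = idm (F (X ⊗ Y))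
                   /\ F2 X Y <o Finv2 X Y = idm (F X ⊗ F Y).

Lemma co2_natural_l X X' Y (f : hom X X') :
  (fmap F f ⊠ idm (F Y)) <o F2 X Y = F2 X' Y <o fmap F (f ⊠ idm Y).
Proof. destruct HF as [Hn _]. rewrite Hn, fmap_id. reflexivity. Qed.

Lemma co2_natural_r X Y Y' (f : hom Y Y') :
  (idm (F X) ⊠ fmap F f) <o F2 X Y = F2 X Y' <o fmap F (idm X ⊠ f).
Proof. destruct HF as [Hn _]. rewrite Hn, fmap_id. reflexivity. Qed.

Lemma co2_inv_natural X X' Y Y' (f : hom X X') (g : hom Y Y') :
  fmap F (f ⊠ g) <o Finv2 X Y = Finv2 X' Y' <o (fmap F f ⊠ fmap F g).
Proof.
  destruct HF as [Hn _].
  rewrite <- (comp_id_l _ _ _ (fmap F (f ⊠ g))), <- (proj1 (HFinv2 X' Y')).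
  rewrite <- (compA (Finv2 X' Y')), Hn, <- !compA, (proj2 (HFinv2 X Y)), comp_id_r.
  reflexivity.
Qed.

Lemma co2_inv_natural_l X X' Y (f : hom X X') :
  Finv2 X' Y <o (fmap F f ⊠ idm (F Y)) = fmap F (f ⊠ idm Y) <o Finv2 X Y.
Proof. rewrite co2_inv_natural, fmap_id. reflexivity. Qed.

Lemma co2_inv_natural_r X Y Y' (f : hom Y Y') :
  Finv2 X Y' <o (idm (F X) ⊠ fmap F f) = fmap F (idm X ⊠ f) <o Finv2 X Y.
Proof. rewrite co2_inv_natural, fmap_id. reflexivity. Qed.

Lemma co2_inv_coassoc X Y Z :
  Finv2 X (Y ⊗ Z) <o (idm (F X) ⊠ Finv2 Y Z) <o idtoiso (assoc_ob (F X) (F Y) (F Z))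
  = idtoiso (f_equal (fob F) (assoc_ob X Y Z)) <o (Finv2 (X ⊗ Y) Z <o (Finv2 X Y ⊠ idm (F Z))).
Proof.
  destruct HF as [_ [Hcoassoc _]].
  eapply comp_square_inverses; [apply Hcoassoc | |].
  - rewrite <- !compA, (compA (idm (F X) ⊠ Finv2 Y Z)), <- tens_comp,
      (proj1 (HFinv2 Y Z)), comp_id_l, tens_id, comp_id_l.
    apply (proj1 (HFinv2 _ _)).
  - rewrite <- !compA, (compA (F2 (X ⊗ Y) Z)), (proj2 (HFinv2 _ _)), comp_id_l,
      <- tens_comp, (proj2 (HFinv2 X Y)), comp_id_l, tens_id.
    reflexivity.
Qed.

Lemma co2_inv_coassoc_mixed P X B :
  F2 P (X ⊗ B) <o idtoiso (f_equal (fob F) (assoc_ob P X B)) <o Finv2 (P ⊗ X) B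
  = (idm (F P) ⊠ Finv2 X B) <o idtoiso (assoc_ob (F P) (F X) (F B)) <o (F2 P X ⊠ idm (F B)).
Proof.
  destruct HF as [_ [Hcoassoc _]].
  transitivity ((idm (F P) ⊠ Finv2 X B) <o ((idm (F P) ⊠ F2 X B) <o F2 P (X ⊗ B) <o
     idtoiso (f_equal (fob F) (assoc_ob P X B))) <o Finv2 (P ⊗ X) B).
  - rewrite !compA, <- tens_comp, (proj1 (HFinv2 X B)), comp_id_l, tens_id, comp_id_l.
    reflexivity.
  - rewrite <- Hcoassoc, <- !compA, (proj2 (HFinv2 _ _)), comp_id_r. reflexivity.
Qed.

End StrongComonoidal.

Arguments co2_natural_l {C D F F2 F0} HF X X' Y f.
Arguments co2_natural_r {C D F F2 F0} HF X Y Y' f.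
Arguments co2_inv_natural_l {C D F F2 F0 Finv2} HF HFinv2 X X' Y f.
Arguments co2_inv_natural_r {C D F F2 F0 Finv2} HF HFinv2 X Y Y' f.
Arguments co2_inv_coassoc {C D F F2 F0 Finv2} HF HFinv2 X Y Z.
Arguments co2_inv_coassoc_mixed {C D F F2 F0 Finv2} HF HFinv2 P X B.

Section PushedHalfBraiding.
Variables (C D : SMC)
  (F : Functor D C) (F2 : co2_type F) (F0 : co0_type F)
  (Finv2 : forall X Y : D, hom (F X ⊗ F Y) (F (X ⊗ Y)))
  (Fbar : Functor C D) (Fbar2 : co2_type Fbar) (Fbar0 : co0_type Fbar)
  (eta : forall V : C, hom V (F (Fbar V)))
  (G : Functor D D) (G2 : co2_type G) (G0 : co0_type G).
Hypothesis HF : is_comonoidal F F2 F0.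
Hypothesis HFinv2 : forall X Y : D, Finv2 X Y <o F2 X Y = idm (F (X ⊗ Y))
                   /\ F2 X Y <o Finv2 X Y = idm (F X ⊗ F Y).
Hypothesis Heta : is_comonoidal_trans (id_functor C) (comp_functor F Fbar)
    (id_co2 C) (id_co0 C) (comp_co2 F Fbar F2 Fbar2) (comp_co0 F Fbar F0 Fbar0) eta.

Let FGFbar := comp_functor F (comp_functor G Fbar).

Lemma eta_natural V W (f : hom V W) : eta W <o f = fmap F (fmap Fbar f) <o eta V.
Proof. apply (proj1 Heta). Qed.

Lemma eta_co2 V W :
  fmap F (Fbar2 V W) <o eta (V ⊗ W) = Finv2 (Fbar V) (Fbar W) <o (eta V ⊠ eta W).
Proof.
  destruct Heta as [_ [Hco2 _]]. specialize (Hco2 V W).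
  unfold id_co2, comp_co2 in Hco2. simpl in Hco2. rewrite comp_id_r in Hco2.
  rewrite Hco2, !compA, (proj1 (HFinv2 _ _)), comp_id_l. reflexivity.
Qed.

Lemma eta_co0 (F0inv : hom I (F I)) :
  F0inv <o F0 = idm _ -> fmap F Fbar0 <o eta I = F0inv.
Proof.
  intros HF0inv. destruct Heta as [_ [_ Hco0]].
  unfold comp_co0, id_co0 in Hco0. simpl in Hco0.
  rewrite <- (comp_id_l _ _ _ (fmap F Fbar0 <o eta I)), <- HF0inv, <- !compA.
  rewrite (compA F0), Hco0, comp_id_r. reflexivity.
Qed.

Lemma pushed_hb_Zmor (X1 X2 : D) (g1 : forall V : D, hom (X1 ⊗ V) (G V ⊗ X1))
  (g2 : forall V : D, hom (X2 ⊗ V) (G V ⊗ X2)) (f : hom X1 X2) :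
  is_Zmor G X1 X2 g1 g2 f ->
  is_Zmor FGFbar (F X1) (F X2)
    (pushed_hb F F2 Finv2 Fbar eta G X1 g1) (pushed_hb F F2 Finv2 Fbar eta G X2 g2)
    (fmap F f).
Proof.
  intros Hf V. unfold pushed_hb. simpl. repeat rewrite compA.
  rewrite (co2_natural_r HF).
  rewrite_comp <- (fmap_comp _ _ _ _ _ _ _ _).
  rewrite Hf, fmap_comp. repeat rewrite compA.
  rewrite_comp <- (co2_inv_natural_l HF HFinv2 _ _ _ _).
  rewrite_comp (tens_interchange _ _). reflexivity.
Qed.

Variables (X : D) (g : forall V : D, hom (X ⊗ V) (G V ⊗ X)).
Hypothesis Hg : is_lax_hb G G2 G0 X g.

Let gFX := pushed_hb F F2 Finv2 Fbar eta G X g.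

Lemma pushed_hb_natural V W (f : hom V W) :
  gFX W <o (idm (F X) ⊠ f) = (fmap FGFbar f ⊠ idm (F X)) <o gFX V.
Proof.
  unfold gFX, pushed_hb.
  rewrite_comp <- (tens_comp_idr _ _).
  rewrite eta_natural, tens_comp_idr. repeat rewrite compA.
  rewrite_comp (co2_inv_natural_r HF HFinv2 _ _ _ _).
  rewrite_comp <- (fmap_comp _ _ _ _ _ _ _ _).
  rewrite (proj1 Hg), fmap_comp. repeat rewrite compA.
  rewrite <- (co2_natural_l HF). reflexivity.
Qed.

Lemma pushed_hb_tensor V W :
  idtoiso (assoc_ob (FGFbar V) (FGFbar W) (F X))
    <o ((comp_co2 F (comp_functor G Fbar) F2 (comp_co2 G Fbar G2 Fbar2) V W ⊠ idm (F X))
        <o gFX (V ⊗ W))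
    <o idtoiso (assoc_ob (F X) V W)
  = (idm (FGFbar V) ⊠ gFX W) <o idtoiso (assoc_ob (FGFbar V) (F X) W) <o (gFX V ⊠ idm W).
Proof.
  destruct HF as [_ [Hcoassoc _]].
  destruct Hg as [Hg_natural [Hg_tensor _]].
  unfold gFX, pushed_hb, comp_co2. simpl. repeat rewrite compA.
  rewrite tens_comp_idl. repeat rewrite compA.
  rewrite_comp (co2_natural_l HF _ _ _ _).
  rewrite_comp <- (fmap_comp _ _ _ _ _ _ _ _).
  rewrite tens_comp_idl. repeat rewrite compA.
  rewrite_comp <- (Hg_natural _ _ _).
  rewrite (fmap_comp _ _ F _ _ _ _ (idm X ⊠ Fbar2 V W)). repeat rewrite compA.
  rewrite_comp <- (co2_inv_natural_r HF HFinv2 _ _ _ _).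
  (* η is comonoidal: F(F̄^2) η_{V⊗W} becomes F^-2 (η_V ⊗ η_W) *)
  rewrite_comp <- (tens_comp_idr _ _). rewrite eta_co2, tens_comp_idr. repeat rewrite compA.
  rewrite_comp <- (assoc_hom _ _ _ _ _ _ _ (idm (F X)) _ _).
  pose proof (Hcoassoc (G (Fbar V)) (G (Fbar W)) X) as HcoassocG.
  rewrite compA in HcoassocG. rewrite HcoassocG. repeat rewrite compA.
  rewrite_comp (co2_inv_coassoc HF HFinv2 _ _ _).
  rewrite <- !fmap_idtoiso.
  rewrite_comp <- (fmap_comp _ _ _ _ _ _ _ _).
  rewrite_comp <- (fmap_comp _ _ _ _ _ _ _ _).
  pose proof (Hg_tensor (Fbar V) (Fbar W)) as HgVW. rewrite !compA in HgVW.
  rewrite HgVW, !fmap_comp. repeat rewrite compA.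
  rewrite_comp <- (co2_natural_r HF _ _ _ _).
  rewrite_comp <- (co2_inv_natural_l HF HFinv2 _ _ _ _).
  rewrite fmap_idtoiso.
  rewrite_comp (co2_inv_coassoc_mixed HF HFinv2 _ _ _).
  rewrite !tens_comp_idr, !tens_comp_idl. repeat rewrite compA.
  rewrite_comp <- (assoc_hom_idl _).
  rewrite (tens_split (idm (F X) ⊠ eta V)). repeat rewrite compA.
  do 4 rewrite_comp <- (tens_interchange _ _).
  reflexivity.
Qed.

Lemma pushed_hb_unit :
  is_iso F0 ->
  idtoiso (lunit_ob (F X))
    <o ((comp_co0 F (comp_functor G Fbar) F0 (comp_co0 G Fbar G0 Fbar0) ⊠ idm (F X))
        <o gFX I)
  = idtoiso (runit_ob (F X)).
Proof.
  intros [F0inv [HF0inv_l HF0inv_r]].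
  destruct HF as [_ [_ [Hrunit Hlunit]]].
  specialize (Hlunit X). specialize (Hrunit X).
  unfold gFX, pushed_hb, comp_co0. simpl. repeat rewrite compA.
  rewrite tens_comp_idl. repeat rewrite compA.
  rewrite_comp (co2_natural_l HF _ _ _ _).
  rewrite compA in Hlunit. rewrite Hlunit, <- fmap_idtoiso, <- !fmap_comp.
  rewrite tens_comp_idl. repeat rewrite compA.
  rewrite_comp <- (proj1 Hg _ _ _).
  pose proof Hg as [_ [_ Hg_unit]]. rewrite compA in Hg_unit. rewrite Hg_unit.
  rewrite fmap_comp. repeat rewrite compA.
  rewrite_comp <- (co2_inv_natural_r HF HFinv2 _ _ _ _).
  (* η is comonoidal: F(F̄^0) η_I is the inverse of F^0 *)
  rewrite_comp <- (tens_comp_idr _ _). rewrite (eta_co0 F0inv HF0inv_l).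
  transitivity (idtoiso (runit_ob (F X)) <o (idm (F X) ⊠ F0) <o F2 X I <o Finv2 X I
                <o (idm (F X) ⊠ F0inv)).
  - rewrite <- (compA (idtoiso (runit_ob (F X))) (idm (F X) ⊠ F0) (F2 X I)), Hrunit,
      fmap_idtoiso.
    reflexivity.
  - rewrite <- (compA _ (F2 X I)), (proj2 (HFinv2 X I)), comp_id_r, <- compA,
      <- tens_comp_idr, HF0inv_r, tens_id, comp_id_r.
    reflexivity.
Qed.

End PushedHalfBraiding.

Theorem mainTheorem2 (C D : SMC)
  (F : Functor D C) (F2 : co2_type F) (F0 : co0_type F)
  (Finv2 : forall X Y : D, hom (F X ⊗ F Y) (F (X ⊗ Y)))
  (Fbar : Functor C D) (Fbar2 : co2_type Fbar) (Fbar0 : co0_type Fbar)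
  (eta : forall V : C, hom V (F (Fbar V)))
  (eps : forall X : D, hom (Fbar (F X)) X)
  (G : Functor D D) (G2 : co2_type G) (G0 : co0_type G) :
  is_comonoidal F F2 F0 ->
  (forall X Y : D, Finv2 X Y <o F2 X Y = idm (F (X ⊗ Y))
                   /\ F2 X Y <o Finv2 X Y = idm (F X ⊗ F Y)) ->
  is_iso F0 ->
  is_comonoidal Fbar Fbar2 Fbar0 ->
  is_adjunction Fbar F eta eps ->
  is_comonoidal_trans (id_functor C) (comp_functor F Fbar)
    (id_co2 C) (id_co0 C) (comp_co2 F Fbar F2 Fbar2) (comp_co0 F Fbar F0 Fbar0) eta ->
  is_comonoidal_trans (comp_functor Fbar F) (id_functor D)
    (comp_co2 Fbar F Fbar2 F2) (comp_co0 Fbar F Fbar0 F0) (id_co2 D) (id_co0 D) eps ->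
  is_comonoidal G G2 G0 ->
  (forall (X : D) (g : forall V : D, hom (X ⊗ V) (G V ⊗ X)),
      is_lax_hb G G2 G0 X g ->
      is_lax_hb (comp_functor F (comp_functor G Fbar))
        (comp_co2 F (comp_functor G Fbar) F2 (comp_co2 G Fbar G2 Fbar2))
        (comp_co0 F (comp_functor G Fbar) F0 (comp_co0 G Fbar G0 Fbar0))
        (F X) (pushed_hb F F2 Finv2 Fbar eta G X g)) /\
  (forall (X1 X2 : D) (g1 : forall V : D, hom (X1 ⊗ V) (G V ⊗ X1))
          (g2 : forall V : D, hom (X2 ⊗ V) (G V ⊗ X2)) (f : hom X1 X2),
      is_lax_hb G G2 G0 X1 g1 -> is_lax_hb G G2 G0 X2 g2 ->
      is_Zmor G X1 X2 g1 g2 f ->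
      is_Zmor (comp_functor F (comp_functor G Fbar)) (F X1) (F X2)
        (pushed_hb F F2 Finv2 Fbar eta G X1 g1)
        (pushed_hb F F2 Finv2 Fbar eta G X2 g2) (fmap F f)).
Proof.
  intros HF HFinv2 HF0 _ _ Heta _ _. split.
  - intros X g Hg. split; [| split].
    + intros V W f. eapply pushed_hb_natural; eassumption.
    + intros V W. eapply pushed_hb_tensor; eassumption.
    + eapply pushed_hb_unit; eassumption.
  - intros X1 X2 g1 g2 f _ _. eapply pushed_hb_Zmor; eassumption.
Qed.
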